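(* For every nonempty team $X$ on a set $\{p_1,\dots,p_n\}$ of propositional variables, the formula $\Theta_X=\bigotimes_{v\in X}(p_1^{v(p_1)}\wedge\dots\wedge p_n^{v(p_n)})$ is $\mathcal{F}$-projective in $\mathbf{PD}$, where $\mathcal F$ is the class of all flat substitutions of $\mathbf{PD}$.
   Context: Here $p^1:=p$, $p^0:=\neg p$, and a team on $V$ is a set of functions $V\to\{0,1\}$. A valuation is a function from the set Prop of propositional variables to $\{0,1\}$; a team is a set of valuations. Formulas of extended propositional dependence logic $\mathbf{PD}$: $\phi::=p\mid\bot\mid\top\mid\,=\!(\alpha_1,\dots,\alpha_k,\beta)\mid\neg\phi\mid\phi\wedge\phi\mid\phi\otimes\phi$ with $\alpha_i,\beta$ flat. Satisfaction on a team $X$: $X\models p$ iff $v(p)=1$ for all $v\in X$; $X\models\bot$ iff $X=\emptyset$; $X\models\top$ always; $\wedge$ conjunction; $X\models\phi\otimes\psi$ iff $X=Y\cup Z$ with $Y\models\phi$, $Z\models\psi$; $X\models\neg\phi$ iff $\{v\}\not\models\phi$ for all $v\in X$; $X\models\,=\!(\vec\alpha,\beta)$ iff for all $v,v'\in X$, if $\{v\}\models\alpha_i\Leftrightarrow\{v'\}\models\alpha_i$ for all $i$, then $\{v\}\models\beta\Leftrightarrow\{v'\}\models\beta$. $\phi$ is flat if for all teams $X$: $X\models\phi$ iff $\{v\}\models\phi$ for all $v\in X$. For finite $\Gamma$, $\Gamma\vdash_{\mathbf{PD}}\phi$ iff all formulas are $\mathbf{PD}$-formulas and every team satisfying all of $\Gamma$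 satisfies $\phi$. A substitution is a map on $\mathbf{PD}$-formulas commuting with all connectives and atoms; it is flat if each $\sigma(p)$ is flat. For a set $\mathcal S$ of substitutions, $\phi$ is $\mathcal S$-projective in $\mathbf{PD}$ if there is $\sigma\in\mathcal S$ with $\vdash_{\mathbf{PD}}\sigma(\phi)$, and $\phi,\sigma(p)\vdash_{\mathbf{PD}}p$ and $\phi,p\vdash_{\mathbf{PD}}\sigma(p)$ for all propositional variables $p$. *)

From Stdlib Require List.
From mathcomp Require Import all_boot.
Set Implicit Arguments. Unset Strict Implicit. Unset Printing Implicit Defensive.

Inductive form : Type :=
  | Var : nat -> form
  | Bot : form
  | Top : form
  | Dep : list form -> form -> form
  | Neg : form -> form
  | And : form -> form -> form
  | Tensor : form -> form -> form.

Definition valuation := nat -> bool.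
Definition team := valuation -> Prop.
Definition single (v : valuation) : team := fun w => w = v.

Fixpoint sat (f : form) (X : team) {struct f} : Prop :=
  match f with
  | Var p => forall v, X v -> v p = true
  | Bot => forall v, ~ X v
  | Top => True
  | Dep a b =>
      forall v w, X v -> X w ->
        (fix agree (l : list form) : Prop :=
           match l with
           | nil => True
           | cons g l' => (sat g (single v) <-> sat g (single w)) /\ agree l'
           end) a ->
        (sat b (single v) <-> sat b (single w))
  | Neg g => forall v, X v -> ~ sat g (single v)
  | And g h => sat g X /\ sat h X
  | Tensor g h => exists Y Z : team,
      (forall v, X v <-> (Y v \/ Z v)) /\ sat g Y /\ sat h Z
  end.

Definition flat (f : form) : Prop :=
  forall X : team, sat f X <-> (forall v, X v -> sat f (single v)).

Fixpoint isPD (f : form) : Prop :=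
  match f with
  | Var _ | Bot | Top => True
  | Dep a b =>
      (fix allPD (l : list form) : Prop :=
         match l with
         | nil => True
         | cons g l' => (flat g /\ isPD g) /\ allPD l'
         end) a /\ (flat b /\ isPD b)
  | Neg g => isPD g
  | And g h | Tensor g h => isPD g /\ isPD h
  end.

Definition entails (Gamma : list form) (phi : form) : Prop :=
  (forall g, List.In g Gamma -> isPD g) /\ isPD phi /\
  forall X : team, (forall g, List.In g Gamma -> sat g X) -> sat phi X.

Fixpoint subst (s : nat -> form) (f : form) : form :=
  match f with
  | Var p => s p
  | Bot => Bot
  | Top => Top
  | Dep a b => Dep (List.map (subst s) a) (subst s b)
  | Neg g => Neg (subst s g)
  | And g h => And (subst s g) (subst s h)
  | Tensor g h => Tensor (subst s g) (subst s h)
  end.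

Definition flat_subst (s : nat -> form) : Prop :=
  forall p, isPD (s p) /\ flat (s p).

Definition flat_projective (phi : form) : Prop :=
  exists s : nat -> form, flat_subst s /\
    entails nil (subst s phi) /\
    (forall p : nat, entails (phi :: subst s (Var p) :: nil) (Var p)) /\
    (forall p : nat, entails (phi :: Var p :: nil) (subst s (Var p))).

(* iterated conjunction / tensor, without trailing units *)
Fixpoint bigAnd (l : list form) : form :=
  match l with
  | nil => Top
  | cons f nil => f
  | cons f l' => And f (bigAnd l')
  end.

Fixpoint bigTensor (l : list form) : form :=
  match l with
  | nil => Bot
  | cons f nil => f
  | cons f l' => Tensor f (bigTensor l')
  end.

Definition lit (p : nat) (b : bool) : form := if b then Var p else Neg (Var p).

Definition Theta (n : nat) (ps : 'I_n -> nat) (X : {set {ffun 'I_n -> bool}}) : form :=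
  bigTensor [seq bigAnd [seq lit (ps i) (v i) | i <- enum 'I_n] | v : {ffun 'I_n -> bool} <- enum X].

(* Theta_X contains no dependence atoms, so it is flat and behaves like a
   classical formula; since X is nonempty and the p_i are distinct, some
   valuation w0 satisfies it.  The Loewenheim-style substitution
   sigma(p) = (Theta /\ p) (x) (~Theta /\ c_p), with c_p = Top or Bot as w0(p)
   is true or false, is flat and equivalent to p under Theta, while outside
   Theta it forces every variable to its value under w0; either way the
   assignment p |-> sigma(p) satisfies Theta, so sigma(Theta) is valid. *)
From mathcomp Require Import all_boot.
From Stdlib Require Import Classical_Prop.

Set Implicit Arguments.
Unset Strict Implicit.
Unset Printing Implicit Defensive.

Fixpoint dep_free (f : form) : Prop :=
  match f with
  | Dep _ _ => False
  | Neg g => dep_free g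
  | And g h | Tensor g h => dep_free g /\ dep_free h
  | _ => True
  end.

(* Classical truth value of a formula under an assignment; the clause for
   dependence atoms is irrelevant for dependence-free formulas. *)
Fixpoint eval (f : form) (V : nat -> Prop) : Prop :=
  match f with
  | Var p => V p
  | Bot => False
  | Top => True
  | Dep _ _ => True
  | Neg g => ~ eval g V
  | And g h => eval g V /\ eval h V
  | Tensor g h => eval g V \/ eval h V
  end.

Definition truth (w : valuation) : nat -> Prop := fun p => w p = true.

Lemma sat_dep_free f :
  dep_free f -> forall X, sat f X <-> (forall w, X w -> eval f (truth w)).
Proof.
elim: f => //=.
- move=> g IH Hg X; split.
  + move=> H w Xw Hev; apply: (H w Xw); apply/(IH Hg) => u ->; exact: Hev.
  + by move=> H w Xw /(IH Hg) Hs; apply: (H w Xw); apply: Hs.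
- move=> g IHg h IHh [Hg Hh] X; rewrite (IHg Hg) (IHh Hh); split.
  + by move=> [A B] w Xw; split; [apply: A | apply: B].
  + by move=> H; split => w Xw; case: (H w Xw).
- move=> g IHg h IHh [Hg Hh] X; split.
  + move=> [Y [Z [HX [/(IHg Hg) HY /(IHh Hh) HZ]]]] w /HX [Yw|Zw].
    * by left; apply: HY.
    * by right; apply: HZ.
  + move=> H.
    exists (fun w => X w /\ eval g (truth w)), (fun w => X w /\ ~ eval g (truth w)).
    split; [|split].
    * move=> w; split; last by case=> -[].
      by move=> Xw; case: (classic (eval g (truth w))); [left | right].
    * by apply/(IHg Hg) => w [].
    * by apply/(IHh Hh) => w [Xw Hn]; case: (H w Xw).
Qed.

Lemma dep_free_PD f : dep_free f -> isPD f.
Proof. by elim: f => //=; intuition. Qed.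

Lemma dep_free_flat f : dep_free f -> flat f.
Proof.
move=> Hf X; rewrite (sat_dep_free Hf); split.
- by move=> H v Xv; apply/(sat_dep_free Hf) => w ->; apply: H.
- by move=> H v /H /(sat_dep_free Hf); apply.
Qed.

Lemma dep_free_subst s f :
  (forall p, dep_free (s p)) -> dep_free f -> dep_free (subst s f).
Proof. by move=> Hs; elim: f => //=; intuition. Qed.

Lemma eval_ext f V V' : (forall p, V p <-> V' p) -> (eval f V <-> eval f V').
Proof.
move=> HV; elim: f => //= [g IH | g IHg h IHh | g IHg h IHh]; first by rewrite IH.
all: by rewrite IHg IHh.
Qed.

Lemma eval_subst s f V : eval (subst s f) V <-> eval f (fun p => eval (s p) V).
Proof.
elim: f => //= [g IH | g IHg h IHh | g IHg h IHh]; first by rewrite IH.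
all: by rewrite IHg IHh.
Qed.

Lemma entails0_eval c : dep_free c -> (forall V, eval c V) -> entails [::] c.
Proof.
move=> Hc Hval; split=> //; split; first exact: dep_free_PD.
by move=> X _; apply/(sat_dep_free Hc) => w _; apply: Hval.
Qed.

Lemma entails2_eval a b c : dep_free a -> dep_free b -> dep_free c ->
  (forall V, eval a V -> eval b V -> eval c V) -> entails [:: a; b] c.
Proof.
move=> Ha Hb Hc Habc; split.
  by move=> g /= [<- | [<- | []]]; apply: dep_free_PD.
split; first exact: dep_free_PD.
move=> X H; apply/(sat_dep_free Hc) => w Xw.
have /(sat_dep_free Ha) Xa := H a (or_introl erefl).
have /(sat_dep_free Hb) Xb := H b (or_intror (or_introl erefl)).
by apply: Habc; [apply: Xa | apply: Xb].
Qed.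

Section ProjectiveSubstitution.

Variables (phi : form) (w0 : valuation).
Hypotheses (phi_dep_free : dep_free phi) (phi_w0 : eval phi (truth w0)).

Definition proj_subst (p : nat) : form :=
  Tensor (And phi (Var p)) (And (Neg phi) (if w0 p then Top else Bot)).

Lemma dep_free_proj_subst p : dep_free (proj_subst p).
Proof. by rewrite /=; case: (w0 p). Qed.

Lemma eval_proj_subst_in V p : eval phi V -> (eval (proj_subst p) V <-> V p).
Proof. by move=> HV /=; split; [case=> -[] | left]. Qed.

Lemma eval_proj_subst_out V p :
  ~ eval phi V -> (eval (proj_subst p) V <-> truth w0 p).
Proof.
move=> HV /=; rewrite /truth; case: (w0 p); split=> //; first by right.
by case=> [[/HV] | [_]].
Qed.

(* The assignment p |-> sigma(p) always lands in a model of phi: V itself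
   when V satisfies phi, and w0 otherwise. *)
Lemma eval_subst_proj V : eval (subst proj_subst phi) V.
Proof.
apply/eval_subst; case: (classic (eval phi V)) => HV.
- by apply/(eval_ext phi (fun p => eval_proj_subst_in p HV)).
- by apply/(eval_ext phi (fun p => eval_proj_subst_out p HV)).
Qed.

Lemma dep_free_flat_projective : flat_projective phi.
Proof.
have Hs := dep_free_proj_subst.
exists proj_subst; split; last split; last split.
- by move=> p; split; [apply: dep_free_PD | apply: dep_free_flat].
- apply: entails0_eval; last exact: eval_subst_proj.
  exact: dep_free_subst.
- move=> p; apply: (entails2_eval phi_dep_free (Hs p)) => // V HV.
  by move=> /(eval_proj_subst_in p HV).
- move=> p; apply: (entails2_eval phi_dep_free _ (Hs p)) => // V HV.
  by move=> /(eval_proj_subst_in p HV).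
Qed.

End ProjectiveSubstitution.

Lemma dep_free_bigAnd (T : Type) (F : T -> form) (s : seq T) :
  (forall x, dep_free (F x)) -> dep_free (bigAnd (map F s)).
Proof. by move=> H; elim: s => [|x [|y s] IH] //=; split. Qed.

Lemma dep_free_bigTensor (T : Type) (F : T -> form) (s : seq T) :
  (forall x, dep_free (F x)) -> dep_free (bigTensor (map F s)).
Proof. by move=> H; elim: s => [|x [|y s] IH] //=; split. Qed.

Lemma eval_bigAnd (T : eqType) (F : T -> form) (s : seq T) V :
  eval (bigAnd (map F s)) V <-> forall x, x \in s -> eval (F x) V.
Proof.
elim: s => [|x [|y s] IH] //=.
- by split=> [H z /[!inE] /eqP -> // | H]; apply: H; rewrite inE.
- rewrite IH; split.
  + by move=> [Hx Hs] z /[!inE] /orP [/eqP -> | /Hs].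
  + by move=> H; split=> [|z Hz]; apply: H; rewrite inE ?eqxx ?Hz ?orbT.
Qed.

Lemma eval_bigTensor (T : eqType) (F : T -> form) (s : seq T) V :
  eval (bigTensor (map F s)) V <-> exists2 x, x \in s & eval (F x) V.
Proof.
elim: s => [|x [|y s] IH] /=; first by split=> // -[].
- by split=> [H | [z /[!inE] /eqP -> //]]; exists x; rewrite ?inE.
- rewrite IH; split.
  + case=> [H | [z Hz H]]; first by exists x; rewrite ?inE ?eqxx.
    by exists z; rewrite // inE Hz orbT.
  + by case=> z /[!inE] /orP [/eqP -> | Hz] H; [left | right; exists z].
Qed.

Lemma eval_lit p b w : eval (lit p b) (truth w) <-> w p = b.
Proof. by case: b; rewrite /= /truth //; case: (w p). Qed.

Lemma dep_free_Theta n (ps : 'I_n -> nat) X : dep_free (Theta ps X).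
Proof. by apply: dep_free_bigTensor => v; apply: dep_free_bigAnd => i; case: (v i). Qed.

Lemma eval_Theta n (ps : 'I_n -> nat) X w :
  eval (Theta ps X) (truth w) <-> exists2 v, v \in X & forall i, w (ps i) = v i.
Proof.
rewrite /Theta eval_bigTensor; split.
- move=> [v /[!mem_enum] Xv /eval_bigAnd Hv]; exists v => // i.
  by apply/eval_lit/Hv; rewrite mem_enum.
- move=> [v Xv Hv]; exists v; first by rewrite mem_enum.
  by apply/eval_bigAnd => i _; apply/eval_lit.
Qed.

Lemma injective_valuation_extension n (ps : 'I_n -> nat) (v : 'I_n -> bool) :
  injective ps -> exists w : valuation, forall i, w (ps i) = v i.
Proof.
move=> ps_inj; exists (fun p => if [pick i | ps i == p] is Some i then v i else false).
move=> i; case: pickP => [j /eqP /ps_inj -> // | /(_ i)].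
by rewrite eqxx.
Qed.

Theorem lemma4p5 (n : nat) (ps : 'I_n -> nat) (X : {set {ffun 'I_n -> bool}}) :
  injective ps -> X != set0 -> flat_projective (Theta ps X).
Proof.
move=> ps_inj /set0Pn [v Xv].
have [w0 Hw0] := injective_valuation_extension v ps_inj.
apply: (@dep_free_flat_projective _ w0); first exact: dep_free_Theta.
by apply/eval_Theta; exists v.
Qed.
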